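(* Let $\mathbf{M}$ be a de Morgan algebra. The following are equivalent: (1) $\mathbf{M}$ is a perfect extension of its Boolean skeleton $B(\mathbf{M})$. (2) $\mathbf{M}$ is (isomorphic to) a Boolean product of copies of $\mathbf{M}_1$ and of its subalgebras $\{0,a,1\}$ and $\{0,1\}$. (3) In the dual space $\mathbf{X}=(X;f,\preccurlyeq,\tau)$ of $\mathbf{M}$, for all $x,y\in X$, $x\preccurlyeq y$ implies $x=y$ or $x=f(y)$.
   Context: A de Morgan algebra is an algebra $(L;\vee,\wedge,{}^\circ,0,1)$ where $(L;\vee,\wedge,0,1)$ is a bounded distributive lattice and ${}^\circ$ is a unary operation satisfying $x^{\circ\circ}=x$, $(x\wedge y)^\circ=x^\circ\vee y^\circ$, $1^\circ=0$. Its Boolean skeleton is the subalgebra $B(\mathbf{M})=\{x\in M\mid x\vee x^\circ=1\}$. An algebra $\mathbf{A}$ is a perfect extension of its subalgebra $\mathbf{B}$ if every congruence of $\mathbf{B}$ has exactly one extension to a congruence of $\mathbf{A}$ (i.e. exactly one $\theta\in\mathrm{Con}(\mathbf{A})$ with $\theta\cap B^2$ equal to the given congruence). $\mathbf{M}_1$ is the four-element de Morgan algebra on $\{0,a,b,1\}$ with lattice order $0<a,b<1$ ($a,b$ incomparable) and $0^\circ=1$, $1^\circ=0$, $a^\circ=a$, $b^\circ=b$. A Boolean product of an indexed family $(\mathbf{A}_y)_{y\in Y}$ of algebras ($Y\neq\emptyset$) is a subdirect product $\mathbf{A}\le\prod_{y\in Y}\mathbf{A}_y$ such that $Y$ can be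 endowed with a Boolean space topology (compact, Hausdorff, with a basis of clopen sets) so that (i) for all $u,v\in A$ the set $\{y\in Y\mid u(y)=v(y)\}$ is clopen, and (ii) for all $u,v\in A$ and clopen $K\subseteq Y$, the function equal to $u$ on $K$ and to $v$ on $Y\setminus K$ belongs to $A$. Dual space: the alter ego of $\mathbf{M}_1$ is $(\{0,a,b,1\};f,\preccurlyeq,\text{discrete topology})$ where $\preccurlyeq$ is the partial order with $b$ the bottom, $a$ the top, and $0,1$ incomparable, and $f(0)=0$, $f(1)=1$, $f(a)=b$, $f(b)=a$. The dual space of $\mathbf{M}$ is $\mathbf{X}=(X;f,\preccurlyeq,\tau)$ where $X$ is the set of all de Morgan algebra homomorphisms $\mathbf{M}\to\mathbf{M}_1$, $f(x)=f\circ x$, $x\preccurlyeq y$ iff $x(m)\preccurlyeq y(m)$ for all $m\in M$, and $\tau$ is the topology inherited from the product topology on $\{0,a,b,1\}^M$ (discrete factors). This is a Priestley space with an order-reversing homeomorphism $f$ of order two, and $\mathbf{M}$ is isomorphic to the algebra of all continuous maps $X\to\{0,a,b,1\}$ preserving $\preccurlyeq$ and commuting with $f$, with operations defined pointwise in $\mathbf{M}_1$. *)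

From HB Require Import structures.
From mathcomp Require Import all_boot all_order.
From mathcomp Require Import all_classical topology.
Set Implicit Arguments. Unset Strict Implicit. Unset Printing Implicit Defensive.
Local Open Scope classical_set_scope.

Record dm_ops (T : Type) := DmOps {
  dm_join : T -> T -> T;
  dm_meet : T -> T -> T;
  dm_neg  : T -> T;
  dm_zero : T;
  dm_one  : T }.

Definition is_deMorgan (T : Type) (M : dm_ops T) : Prop :=
  let j := dm_join M in let m := dm_meet M in let n := dm_neg M in
  let z := dm_zero M in let o := dm_one M in
  (forall x y w, j x (j y w) = j (j x y) w) /\
  (forall x y w, m x (m y w) = m (m x y) w) /\
  (forall x y, j x y = j y x) /\
  (forall x y, m x y = m y x) /\
  (forall x y, j x (m x y) = x) /\
  (forall x y, m x (j x y) = x) /\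
  (forall x y w, m x (j y w) = j (m x y) (m x w)) /\
  (forall x, j x z = x) /\
  (forall x, m x o = x) /\
  (forall x, n (n x) = x) /\
  (forall x y, n (m x y) = j (n x) (n y)) /\
  n o = z.

Definition is_subalgebra (T : Type) (M : dm_ops T) (S : T -> Prop) : Prop :=
  S (dm_zero M) /\ S (dm_one M) /\
  (forall x y, S x -> S y -> S (dm_join M x y)) /\
  (forall x y, S x -> S y -> S (dm_meet M x y)) /\
  (forall x, S x -> S (dm_neg M x)).

(** A congruence of S is represented by a relation on T which only
    relates elements of S, and is an equivalence relation on S compatible
    with the operations of S. *)
Definition is_congruence_on (T : Type) (M : dm_ops T) (S : T -> Prop)
    (th : T -> T -> Prop) : Prop :=
  (forall x y, th x y -> S x /\ S y) /\
  (forall x, S x -> th x x) /\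
  (forall x y, th x y -> th y x) /\
  (forall x y w, th x y -> th y w -> th x w) /\
  (forall x x' y y', th x x' -> th y y' -> th (dm_join M x y) (dm_join M x' y')) /\
  (forall x x' y y', th x x' -> th y y' -> th (dm_meet M x y) (dm_meet M x' y')) /\
  (forall x x', th x x' -> th (dm_neg M x) (dm_neg M x')).

Definition is_congruence (T : Type) (M : dm_ops T) (th : T -> T -> Prop) : Prop :=
  is_congruence_on M (fun _ => True) th.

Definition restricts_to (T : Type) (S : T -> Prop) (th phi : T -> T -> Prop) : Prop :=
  forall x y, S x -> S y -> (th x y <-> phi x y).

Definition perfect_extension (T : Type) (M : dm_ops T) (S : T -> Prop) : Prop :=
  forall phi, is_congruence_on M S phi ->
    (exists th, is_congruence M th /\ restricts_to S th phi) /\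
    (forall th1 th2, is_congruence M th1 -> restricts_to S th1 phi ->
                     is_congruence M th2 -> restricts_to S th2 phi ->
                     forall x y, th1 x y <-> th2 x y).

Definition boolean_skeleton (T : Type) (M : dm_ops T) : T -> Prop :=
  fun x => dm_join M x (dm_neg M x) = dm_one M.

Inductive m1 := m1_0 | m1_a | m1_b | m1_1.

Definition m1_join (x y : m1) : m1 :=
  match x, y with
  | m1_1, _ | _, m1_1 => m1_1
  | m1_0, y => y
  | x, m1_0 => x
  | m1_a, m1_a => m1_a
  | m1_b, m1_b => m1_b
  | _, _ => m1_1
  end.

Definition m1_meet (x y : m1) : m1 :=
  match x, y with
  | m1_0, _ | _, m1_0 => m1_0
  | m1_1, y => y
  | x, m1_1 => x
  | m1_a, m1_a => m1_a
  | m1_b, m1_b => m1_b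
  | _, _ => m1_0
  end.

Definition m1_neg (x : m1) : m1 :=
  match x with m1_0 => m1_1 | m1_1 => m1_0 | m1_a => m1_a | m1_b => m1_b end.

Inductive factor := F_M1 | F_0a1 | F_01.

Definition in_factor (k : factor) (c : m1) : Prop :=
  match k with
  | F_M1 => True
  | F_0a1 => c = m1_0 \/ c = m1_a \/ c = m1_1
  | F_01 => c = m1_0 \/ c = m1_1
  end.

Definition boolean_space (Y : topologicalType) : Prop :=
  compact [set: Y] /\ hausdorff_space Y /\
  (forall U : set Y, open U -> forall y, U y ->
     exists K : set Y, clopen K /\ K y /\ K `<=` U).

(** P (a set of elements of prod_y A_y, where A_y is the subalgebra of M1
    named by [kind y]) is a Boolean product of the family (A_y)_y. *)
Definition boolean_product (Y : topologicalType) (kind : Y -> factor)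
    (P : (Y -> m1) -> Prop) : Prop :=
  (exists y : Y, True) /\
  (forall u, P u -> forall y, in_factor (kind y) (u y)) /\
  P (fun _ => m1_0) /\ P (fun _ => m1_1) /\
  (forall u v, P u -> P v -> P (fun y => m1_join (u y) (v y))) /\
  (forall u v, P u -> P v -> P (fun y => m1_meet (u y) (v y))) /\
  (forall u, P u -> P (fun y => m1_neg (u y))) /\
  (forall y c, in_factor (kind y) c -> exists u, P u /\ u y = c) /\
  boolean_space Y /\
  (forall u v, P u -> P v -> clopen [set y | u y = v y]) /\
  (forall u v (K : set Y), P u -> P v -> clopen K ->
     forall w : Y -> m1, (forall y, K y -> w y = u y) ->
                         (forall y, ~ K y -> w y = v y) -> P w).

Definition iso_boolean_product_M1 (T : Type) (M : dm_ops T) : Prop :=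
  exists (Y : topologicalType) (kind : Y -> factor) (h : T -> (Y -> m1)),
    (forall x x', h x = h x' -> x = x') /\
    (forall x x', h (dm_join M x x') = (fun y => m1_join (h x y) (h x' y))) /\
    (forall x x', h (dm_meet M x x') = (fun y => m1_meet (h x y) (h x' y))) /\
    (forall x, h (dm_neg M x) = (fun y => m1_neg (h x y))) /\
    h (dm_zero M) = (fun _ => m1_0) /\
    h (dm_one M) = (fun _ => m1_1) /\
    boolean_product kind (fun u => exists x, h x = u).

(** The alter-ego order: b is the bottom, a the top, 0 and 1 incomparable. *)
Definition m1_dle (c d : m1) : Prop :=
  c = d \/ c = m1_b \/ d = m1_a.

Definition m1_f (c : m1) : m1 :=
  match c with m1_0 => m1_0 | m1_1 => m1_1 | m1_a => m1_b | m1_b => m1_a end.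

(** Points of the dual space: de Morgan homomorphisms M -> M1. *)
Definition is_hom_to_M1 (T : Type) (M : dm_ops T) (x : T -> m1) : Prop :=
  (forall p q, x (dm_join M p q) = m1_join (x p) (x q)) /\
  (forall p q, x (dm_meet M p q) = m1_meet (x p) (x q)) /\
  (forall p, x (dm_neg M p) = m1_neg (x p)) /\
  x (dm_zero M) = m1_0 /\ x (dm_one M) = m1_1.

Definition dual_le (T : Type) (x y : T -> m1) : Prop := forall p, m1_dle (x p) (y p).

From Pilot Require Import Defs.
From HB Require Import structures.
From mathcomp Require Import all_boot all_order.
From mathcomp Require Import all_classical topology.
Set Implicit Arguments. Unset Strict Implicit. Unset Printing Implicit Defensive.
Local Open Scope classical_set_scope.

(* Everything is computed through the homomorphisms M -> M1: by the prime filter theorem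
   they separate the points of M, so identities in M reduce to finite case analyses in M1.

   The three conditions are equivalent to (S): every x ⊓ x° has a complement t in the
   interval [0, x ⊔ x°]; a homomorphism then sends t to 1 when it sends x to 0 or 1, and
   to 0 when it sends x to a or b.
   - (1) => (3): if h ≼ k in the dual space, h and k agree on B(M), so their kernels extend
     the same congruence of B(M); by perfectness they coincide, and in M1 this forces
     h = k or h = f ∘ k.
   - (3) => (S): if x ⊓ x° has no such complement, nested prime filters Q ⊆ R yield points
     h_Q ≼ h_R of the dual space sending x ⊔ x° to 1 and to a respectively.
   - (S) => (1): the complements give a Boolean element ε(x, y) sent to 1 exactly by the
     homomorphisms identifying x and y, and identified with 1 by every congruence that
     identifies x and y.  Hence a congruence θ is determined by its restriction φ to B(M):
     θ x y iff x ⊓ e = y ⊓ e for some e in B(M) with φ e 1.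
   - (S) <=> (2): every ultrafilter of B(M) extends to a prime filter, hence gives a
     homomorphism M -> M1, composed with f if needed so that its image is M1, {0,a,1} or
     {0,1}; this represents M over the Stone space of B(M), and the set of points where two
     elements x, y agree is the basic clopen set of ε(x, y).  Conversely, in a Boolean product
     the complement t is patched from 0 and 1 along the clopen set where x = x°. *)

Definition m1_eqb (c d : m1) : bool :=
  match c, d with
  | m1_0, m1_0 | m1_a, m1_a | m1_b, m1_b | m1_1, m1_1 => true
  | _, _ => false
  end.

Lemma m1_eqP : Equality.axiom m1_eqb.
Proof. by case; case; constructor. Qed.

HB.instance Definition _ := hasDecEq.Build m1 m1_eqP.

Definition m1_dleb (c d : m1) : bool := [|| c == d, c == m1_b | d == m1_a].

Lemma m1_dleP c d : reflect (m1_dle c d) (m1_dleb c d).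
Proof. by case: c; case: d; constructor; rewrite /m1_dle; intuition discriminate. Qed.

Definition m1_boolb (c : m1) : bool :=
  match c with m1_0 | m1_1 => true | _ => false end.

Definition m1_rcompl (c : m1) : m1 := if m1_boolb c then m1_1 else m1_0.

Definition dual_f (T : Type) (h : T -> m1) : T -> m1 := fun p => m1_f (h p).

Lemma dual_f_hom (T : Type) (M : dm_ops T) h :
  is_hom_to_M1 M h -> is_hom_to_M1 M (dual_f h).
Proof.
case=> hJ [hM [hN [h0 h1]]]; rewrite /dual_f.
split; [|split; [|split; [|split]]].
- by move=> p q; rewrite hJ; case: (h p); case: (h q).
- by move=> p q; rewrite hM; case: (h p); case: (h q).
- by move=> p; rewrite hN; case: (h p).
- by rewrite h0.
- by rewrite h1.
Qed.

Record skel_ultrafilter (T : Type) (M : dm_ops T) (U : set T) : Prop := SkelUltrafilter {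
  uf_skel : U `<=` boolean_skeleton M;
  uf_one : U (dm_one M);
  uf_zero : ~ U (dm_zero M);
  uf_meet : forall e1 e2, U e1 -> U e2 -> U (dm_meet M e1 e2);
  uf_compl : forall e, boolean_skeleton M e -> U e \/ U (dm_neg M e);
  uf_meetE : forall e1 e2, boolean_skeleton M e1 -> boolean_skeleton M e2 ->
               U (dm_meet M e1 e2) -> U e1 /\ U e2 }.

Definition stone (T : Type) (M : dm_ops T) := {U : set T | skel_ultrafilter M U}.
HB.instance Definition _ T M := gen_eqMixin (@stone T M).
HB.instance Definition _ T M := gen_choiceMixin (@stone T M).

Definition stone_basic (T : Type) (M : dm_ops T) (e : T) : set (stone M) := fun V => sval V e.
Arguments stone_basic {T} M e.

Definition stone_open (T : Type) (M : dm_ops T) (A : set (stone M)) :=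
  forall V, A V -> exists2 e, sval V e & stone_basic M e `<=` A.

Lemma stone_openT (T : Type) (M : dm_ops T) : stone_open [set: stone M].
Proof. by move=> V _; exists (dm_one M) => //; exact: uf_one (svalP V). Qed.

Lemma stone_openI (T : Type) (M : dm_ops T) : setI_closed (@stone_open T M).
Proof.
move=> A B oA oB V [AV BV].
have [e1 V1 s1] := oA V AV; have [e2 V2 s2] := oB V BV.
exists (dm_meet M e1 e2); first exact: (uf_meet (svalP V)).
have B1 := uf_skel (svalP V) V1; have B2 := uf_skel (svalP V) V2.
by move=> W /(uf_meetE (svalP W) B1 B2) [W1 W2]; split; [exact: s1|exact: s2].
Qed.

Lemma stone_openU (T : Type) (M : dm_ops T) (I : Type) (f : I -> set (stone M)) :
  (forall i, stone_open (f i)) -> stone_open (\bigcup_i f i).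
Proof.
move=> oF V [i _ fiV]; have [e Ve se] := oF i V fiV.
by exists e => // W We; exists i => //; exact: se.
Qed.

HB.instance Definition _ T M :=
  isOpenTopological.Build (@stone T M) (@stone_openT T M) (@stone_openI T M) (@stone_openU T M).

Declare Scope dm_scope.

Section DeMorgan.
Variables (T : Type) (M : dm_ops T).
Hypothesis HM : is_deMorgan M.

Local Notation "x ⊔ y" := (dm_join M x y) (at level 50, left associativity) : dm_scope.
Local Notation "x ⊓ y" := (dm_meet M x y) (at level 40, left associativity) : dm_scope.
Local Notation "x ^*" := (dm_neg M x) : dm_scope.
Local Notation "0" := (dm_zero M) : dm_scope.
Local Notation "1" := (dm_one M) : dm_scope.
Local Notation skel := (boolean_skeleton M).
Local Notation hom := (is_hom_to_M1 M).
Local Open Scope dm_scope.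

Lemma dm_joinA x y z : x ⊔ (y ⊔ z) = x ⊔ y ⊔ z. Proof. by move: HM; firstorder. Qed.
Lemma dm_meetA x y z : x ⊓ (y ⊓ z) = x ⊓ y ⊓ z. Proof. by move: HM; firstorder. Qed.
Lemma dm_joinC x y : x ⊔ y = y ⊔ x. Proof. by move: HM; firstorder. Qed.
Lemma dm_meetC x y : x ⊓ y = y ⊓ x. Proof. by move: HM; firstorder. Qed.
Lemma dm_joinKI x y : x ⊔ x ⊓ y = x. Proof. by move: HM; firstorder. Qed.
Lemma dm_meetKU x y : x ⊓ (x ⊔ y) = x. Proof. by move: HM; firstorder. Qed.
Lemma dm_meetUr x y z : x ⊓ (y ⊔ z) = x ⊓ y ⊔ x ⊓ z. Proof. by move: HM; firstorder. Qed.
Lemma dm_joinx0 x : x ⊔ 0 = x. Proof. by move: HM; firstorder. Qed.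
Lemma dm_meetx1 x : x ⊓ 1 = x. Proof. by move: HM; firstorder. Qed.
Lemma dm_negK x : x^* ^* = x. Proof. by move: HM; firstorder. Qed.
Lemma dm_negI x y : (x ⊓ y)^* = x^* ⊔ y^*. Proof. by move: HM; firstorder. Qed.
Lemma dm_neg1 : 1^* = 0. Proof. by move: HM; firstorder. Qed.

Lemma dm_neg0 : 0^* = 1. Proof. by rewrite -dm_neg1 dm_negK. Qed.
Lemma dm_negU x y : (x ⊔ y)^* = x^* ⊓ y^*.
Proof. by rewrite -{1}(dm_negK x) -{1}(dm_negK y) -dm_negI dm_negK. Qed.
Lemma dm_meetUl x y z : (x ⊔ y) ⊓ z = x ⊓ z ⊔ y ⊓ z.
Proof. by rewrite dm_meetC dm_meetUr !(dm_meetC z). Qed.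
Lemma dm_joinIr x y z : x ⊔ y ⊓ z = (x ⊔ y) ⊓ (x ⊔ z).
Proof. by apply: (can_inj dm_negK); rewrite !(dm_negU, dm_negI) dm_meetUr. Qed.
Lemma dm_meetxx x : x ⊓ x = x. Proof. by rewrite -{2}(dm_joinKI x x) dm_meetKU. Qed.
Lemma dm_joinxx x : x ⊔ x = x. Proof. by rewrite -{2}(dm_meetKU x x) dm_joinKI. Qed.
Lemma dm_meet1x x : 1 ⊓ x = x. Proof. by rewrite dm_meetC dm_meetx1. Qed.
Lemma dm_join0x x : 0 ⊔ x = x. Proof. by rewrite dm_joinC dm_joinx0. Qed.
Lemma dm_meet0x x : 0 ⊓ x = 0. Proof. by rewrite -{2}(dm_meetKU 0 x) dm_join0x. Qed.
Lemma dm_join1x x : 1 ⊔ x = 1. Proof. by rewrite -{2}(dm_joinKI 1 x) dm_meet1x. Qed.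
Lemma dm_meetx0 x : x ⊓ 0 = 0. Proof. by rewrite dm_meetC dm_meet0x. Qed.
Lemma dm_meetIIr x y z : x ⊓ y ⊓ z = (x ⊓ z) ⊓ (y ⊓ z).
Proof. by rewrite -!dm_meetA (dm_meetA z) (dm_meetC z y) -(dm_meetA y) dm_meetxx. Qed.
Lemma dm_joinUUr x y z : x ⊔ y ⊔ z = (x ⊔ z) ⊔ (y ⊔ z).
Proof. by rewrite -!dm_joinA (dm_joinA z) (dm_joinC z y) -(dm_joinA y) dm_joinxx. Qed.

Definition dm_le x y := x ⊓ y = x.
Local Notation "x ⊑ y" := (dm_le x y) (at level 70) : dm_scope.

Lemma dm_leEjoin x y : x ⊑ y <-> x ⊔ y = y.
Proof.
split=> [<-|<-]; first by rewrite dm_joinC dm_meetC dm_joinKI.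
exact: dm_meetKU.
Qed.
Lemma dm_le_refl x : x ⊑ x. Proof. exact: dm_meetxx. Qed.
Lemma dm_le_trans y x z : x ⊑ y -> y ⊑ z -> x ⊑ z.
Proof. by rewrite /dm_le => xy yz; rewrite -xy -dm_meetA yz. Qed.
Lemma dm_le_anti x y : x ⊑ y -> y ⊑ x -> x = y.
Proof. by rewrite /dm_le => xy yx; rewrite -xy dm_meetC yx. Qed.
Lemma dm_leIl x y : x ⊓ y ⊑ x. Proof. by rewrite /dm_le dm_meetC dm_meetA dm_meetxx. Qed.
Lemma dm_leIr x y : x ⊓ y ⊑ y. Proof. by rewrite /dm_le -dm_meetA dm_meetxx. Qed.
Lemma dm_leUl x y : x ⊑ x ⊔ y. Proof. exact: dm_meetKU. Qed.
Lemma dm_leUr x y : y ⊑ x ⊔ y. Proof. by rewrite dm_joinC; exact: dm_meetKU. Qed.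
Lemma dm_lexI z x y : z ⊑ x -> z ⊑ y -> z ⊑ x ⊓ y.
Proof. by rewrite /dm_le => zx zy; rewrite dm_meetA zx zy. Qed.
Lemma dm_leUx x y z : x ⊑ z -> y ⊑ z -> x ⊔ y ⊑ z.
Proof. by move=> /dm_leEjoin xz /dm_leEjoin yz; apply/dm_leEjoin; rewrite -dm_joinA yz xz. Qed.
Lemma dm_lex1 x : x ⊑ 1. Proof. exact: dm_meetx1. Qed.
Lemma dm_le0x x : 0 ⊑ x. Proof. exact: dm_meet0x. Qed.
Lemma dm_lex0 x : x ⊑ 0 -> x = 0. Proof. by move=> x0; rewrite -x0 dm_meetx0. Qed.
Lemma dm_le1x x : 1 ⊑ x -> x = 1. Proof. by move=> x1; rewrite -x1 dm_meet1x. Qed.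
Lemma dm_leI2 x y z w : x ⊑ y -> z ⊑ w -> x ⊓ z ⊑ y ⊓ w.
Proof.
move=> xy zw; apply: dm_lexI.
  exact: dm_le_trans (dm_leIl _ _) xy.
exact: dm_le_trans (dm_leIr _ _) zw.
Qed.
Lemma dm_leU2 x y z w : x ⊑ y -> z ⊑ w -> x ⊔ z ⊑ y ⊔ w.
Proof.
move=> xy zw; apply: dm_leUx.
  exact: dm_le_trans xy (dm_leUl _ _).
exact: dm_le_trans zw (dm_leUr _ _).
Qed.

Record dm_filter (F : set T) : Prop := DmFilter {
  filter_one : F 1;
  filter_meet : forall x y, F x -> F y -> F (x ⊓ y);
  filter_up : forall x y, F x -> x ⊑ y -> F y }.

Record dm_ideal (I : set T) : Prop := DmIdeal {
  ideal_zero : I 0;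
  ideal_join : forall x y, I x -> I y -> I (x ⊔ y);
  ideal_down : forall x y, I y -> x ⊑ y -> I x }.

Record dm_prime (P : set T) : Prop := DmPrime {
  prime_filter : dm_filter P;
  prime_proper : ~ P 0;
  prime_join : forall x y, P (x ⊔ y) -> P x \/ P y }.

Definition disjoint_sets (A B : set T) := forall x, A x -> ~ B x.

Lemma up_filter x : dm_filter [set z | x ⊑ z].
Proof. by split=> [|y z|y z]; [exact: dm_lex1|exact: dm_lexI|exact: dm_le_trans]. Qed.

Lemma down_ideal y : dm_ideal [set z | z ⊑ y].
Proof. by split=> [|x z|x z /= zy xz]; [exact: dm_le0x|exact: dm_leUx|exact: dm_le_trans zy]. Qed.

Lemma zero_ideal : dm_ideal [set z | z = 0].
Proof.
split=> [//|x y /= -> ->|x y /= ->]; first exact: dm_joinx0.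
by rewrite /dm_le dm_meetx0.
Qed.

Lemma prime_meetE P x y : dm_prime P -> P (x ⊓ y) <-> P x /\ P y.
Proof.
case=> [[_ PI PU] _ _]; split=> [Pxy|[]]; last exact: PI.
by split; apply: PU Pxy _; [exact: dm_leIl|exact: dm_leIr].
Qed.

Lemma prime_joinE P x y : dm_prime P -> P (x ⊔ y) <-> P x \/ P y.
Proof.
case=> [[_ _ PU] _ PJ]; split=> [|[]]; first exact: PJ.
  by move/PU; apply; exact: dm_leUl.
by move/PU; apply; exact: dm_leUr.
Qed.

Definition filter_gen (A : set T) (w : T) : set T := [set z | exists2 g, A g & g ⊓ w ⊑ z].

Lemma filter_gen_filter A w :
  A 1 -> (forall x y, A x -> A y -> A (x ⊓ y)) -> dm_filter (filter_gen A w).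
Proof.
move=> A1 AI; split.
- by exists 1 => //; exact: dm_lex1.
- move=> x y [g1 Ag1 g1x] [g2 Ag2 g2y]; exists (g1 ⊓ g2); first exact: AI.
  by rewrite dm_meetIIr; exact: dm_leI2.
- by move=> x y [g Ag gx] xy; exists g => //; exact: dm_le_trans xy.
Qed.

Lemma filter_gen_sub A w : A `<=` filter_gen A w.
Proof. by move=> g Ag; exists g => //; exact: dm_leIl. Qed.

Lemma filter_gen_gen A w : A 1 -> filter_gen A w w.
Proof. by exists 1 => //; rewrite dm_meet1x; exact: dm_le_refl. Qed.

Section PrimeFilterTheorem.
Variables (F I : set T).
Hypotheses (HF : dm_filter F) (HI : dm_ideal I) (FI : disjoint_sets F I).

Let good (X : set T) := [/\ dm_filter X, F `<=` X & disjoint_sets X I].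

Lemma good_chain_bigcup (C : set (set T)) :
  (forall X, C X -> good (F `|` X)) -> total_on C subset ->
  good (F `|` \bigcup_(X in C) X).
Proof.
move=> Cgood Ctot; set U := F `|` _.
have subU X : C X -> F `|` X `<=` U by move=> CX z [Fz|Xz]; [left|right; exists X].
have common x y : U x -> U y -> exists Y, [/\ good Y, Y `<=` U, Y x & Y y].
  case=> [Fx|[X1 C1 X1x]] [Fy|[X2 C2 X2y]].
  - by exists F; split=> //; [split|move=> z; left].
  - by exists (F `|` X2); split; [exact: Cgood|exact: subU|left|right].
  - by exists (F `|` X1); split; [exact: Cgood|exact: subU|right|left].
  - have [X12|X21] := Ctot _ _ C1 C2.
      by exists (F `|` X2); split; [exact: Cgood|exact: subU|right; exact: X12|right].
    by exists (F `|` X1); split; [exact: Cgood|exact: subU|right|right; exact: X21].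
split; last 2 first.
- by move=> z Fz; left.
- by move=> z Uz; have [Y [[_ _ YI] _ Yz _]] := common z z Uz Uz; exact: YI.
split; first by left; exact: filter_one HF.
  by move=> x y Ux Uy; have [Y [[YF _ _] sY Yx Yy]] := common x y Ux Uy; exact/sY/(filter_meet YF).
by move=> x y Ux xy; have [Y [[YF _ _] sY Yx _]] := common x x Ux Ux; exact/sY/(filter_up YF Yx).
Qed.

Lemma maximal_good : exists A, good A /\ forall B, A `<` B -> ~ good B.
Proof.
have [A [gA Amax]] :=
  Zorn_bigcup (P := fun X => good (F `|` X)) (fun C CP => @good_chain_bigcup C CP).
exists (F `|` A); split=> // B [FAB BFA] gB.
have AB : A `<` B.
  split=> [z Az|BA]; first by apply: FAB; right.
  by apply: BFA => z /BA Az; right.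
by apply: Amax AB _; rewrite setUidr //; case: gB.
Qed.

Lemma maximal_good_prime A : good A -> (forall B, A `<` B -> ~ good B) -> dm_prime A.
Proof.
case=> AF FA AI Amax; split=> [//|A0|x y Axy]; first exact: AI _ A0 (ideal_zero HI).
apply: contrapT => /not_orP [nAx nAy].
have escape w : ~ A w -> exists2 g, A g & I (g ⊓ w).
  move=> nAw; apply: contrapT => noI; apply: (Amax (filter_gen A w)).
    split; first exact: filter_gen_sub.
    by move=> sub; apply/nAw/sub/filter_gen_gen; exact: filter_one AF.
  split; first exact: filter_gen_filter (filter_one AF) (filter_meet AF).
    by move=> z /FA; exact: filter_gen_sub.
  by move=> z [g Ag gz] Iz; apply: noI; exists g => //; exact: (ideal_down HI Iz gz).
have [g1 Ag1 I1] := escape x nAx; have [g2 Ag2 I2] := escape y nAy.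
apply: (AI (g1 ⊓ g2 ⊓ (x ⊔ y))); first exact: (filter_meet AF (filter_meet AF Ag1 Ag2) Axy).
rewrite dm_meetUr; apply: (ideal_join HI).
  exact: (ideal_down HI I1 (dm_leI2 (dm_leIl _ _) (dm_le_refl _))).
exact: (ideal_down HI I2 (dm_leI2 (dm_leIr _ _) (dm_le_refl _))).
Qed.

Theorem prime_filter_theorem : exists2 P, dm_prime P & F `<=` P /\ disjoint_sets P I.
Proof.
have [A [gA Amax]] := maximal_good.
by exists A; [exact: maximal_good_prime|case: gA].
Qed.

End PrimeFilterTheorem.

Lemma filter_in_prime F : dm_filter F -> ~ F 0 -> exists2 P, dm_prime P & F `<=` P.
Proof.
move=> HF F0; have [|P Pp [FP _]] := prime_filter_theorem HF zero_ideal; last by exists P.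
by move=> z Fz /= z0; apply: F0; rewrite -z0.
Qed.

Lemma prime_sep x y : ~ x ⊑ y -> exists2 P, dm_prime P & P x /\ ~ P y.
Proof.
move=> nxy; have [|P Pp [FP PI]] := prime_filter_theorem (up_filter x) (down_ideal y).
  by move=> z xz zy; apply/nxy/(dm_le_trans xz).
exists P => //; split; first by apply: FP; exact: dm_le_refl.
by move/PI; apply; exact: dm_le_refl.
Qed.

Section Homomorphism.
Variable h : T -> m1.
Hypothesis Hh : hom h.
Lemma hom_join p q : h (p ⊔ q) = m1_join (h p) (h q). Proof. by case: Hh. Qed.
Lemma hom_meet p q : h (p ⊓ q) = m1_meet (h p) (h q). Proof. by case: Hh => _ []. Qed.
Lemma hom_neg p : h p^* = m1_neg (h p). Proof. by case: Hh => _ [_ []]. Qed.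
Lemma hom_zero : h 0 = m1_0. Proof. by case: Hh => _ [_ [_ []]]. Qed.
Lemma hom_one : h 1 = m1_1. Proof. by case: Hh => _ [_ [_ []]]. Qed.
End Homomorphism.

Ltac hom_simpl Hh := do ![rewrite (hom_join Hh)|rewrite (hom_meet Hh)|rewrite (hom_neg Hh)
                        |rewrite (hom_zero Hh)|rewrite (hom_one Hh)].

Definition hom_of_prime (P : set T) x :=
  if `[< P x >] then (if `[< P x^* >] then m1_a else m1_1)
  else (if `[< P x^* >] then m1_0 else m1_b).

Lemma hom_of_prime_hom P : dm_prime P -> hom (hom_of_prime P).
Proof.
move=> Pp; have [[P1 _ _] P0 _] := Pp.
have PI x y : `[< P (x ⊓ y) >] = `[< P x >] && `[< P y >].
  by rewrite (asbool_equiv_eq (prime_meetE _ _ Pp)) asbool_and.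
have PU x y : `[< P (x ⊔ y) >] = `[< P x >] || `[< P y >].
  by rewrite (asbool_equiv_eq (prime_joinE _ _ Pp)) asbool_or.
rewrite /hom_of_prime; split; [|split; [|split; [|split]]].
- by move=> p q; rewrite dm_negU PU PI; do 4!case: `[< _ >].
- by move=> p q; rewrite dm_negI PU PI; do 4!case: `[< _ >].
- by move=> p; rewrite dm_negK; do 2!case: `[< _ >].
- by rewrite dm_neg0 (asboolT P1) (asboolF P0).
- by rewrite dm_neg1 (asboolT P1) (asboolF P0).
Qed.

Lemma hom_of_prime_le P Q : P `<=` Q -> dual_le (hom_of_prime P) (hom_of_prime Q).
Proof.
move=> PQ p; apply/m1_dleP; rewrite /hom_of_prime.
case: (asboolP (P p)) => Pp; case: (asboolP (P p^*)) => Pn;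
  case: (asboolP (Q p)) => Qp; case: (asboolP (Q p^*)) => Qn //; exfalso;
  by [apply: Qp; exact: PQ | apply: Qn; exact: PQ].
Qed.

Lemma hom_of_primeE P x : P x <-> hom_of_prime P x \in [:: m1_a; m1_1].
Proof. by rewrite /hom_of_prime; case: (asboolP (P x)); case: `[< _ >]. Qed.

Lemma hom_separation x y : x <> y -> exists2 h, hom h & h x <> h y.
Proof.
move=> nxy.
have [u [v [[P Pp [Pu nPv]] uv]]] : exists u v,
    (exists2 P, dm_prime P & P u /\ ~ P v) /\ (u = x /\ v = y \/ u = y /\ v = x).
  have [nxy'|nyx'] : ~ x ⊑ y \/ ~ y ⊑ x.
    by apply: contrapT => /not_orP [/contrapT xy /contrapT yx]; exact/nxy/dm_le_anti.
  - by exists x, y; split; [exact: prime_sep|left].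
  - by exists y, x; split; [exact: prime_sep|right].
exists (hom_of_prime P); first exact: hom_of_prime_hom.
have nuv : hom_of_prime P u <> hom_of_prime P v.
  by move=> e; apply/nPv/hom_of_primeE; rewrite -e; apply/hom_of_primeE.
by case: uv => [[<- <-]|[<- <-] e] //; apply: nuv; rewrite e.
Qed.

Lemma dm_hom_ext x y : (forall h, hom h -> h x = h y) -> x = y.
Proof. by move=> xy; apply: contrapT => /hom_separation [h Hh]; apply; exact: xy. Qed.

Lemma hom_skel h p : hom h -> skel p -> m1_boolb (h p).
Proof. by move=> Hh /(congr1 h); hom_simpl Hh; case: (h p). Qed.

Lemma skel_homP p : (forall h, hom h -> m1_boolb (h p)) -> skel p.
Proof.
move=> Hp; apply: dm_hom_ext => h Hh; hom_simpl Hh.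
by move: (Hp h Hh); case: (h p).
Qed.

Lemma skel0 : skel 0. Proof. by rewrite /boolean_skeleton dm_neg0 dm_join0x. Qed.
Lemma skel1 : skel 1. Proof. exact: dm_join1x. Qed.

Lemma skel_join p q : skel p -> skel q -> skel (p ⊔ q).
Proof.
move=> Bp Bq; apply: skel_homP => h Hh; hom_simpl Hh.
by move: (hom_skel Hh Bp) (hom_skel Hh Bq); case: (h p); case: (h q).
Qed.

Lemma skel_meet p q : skel p -> skel q -> skel (p ⊓ q).
Proof.
move=> Bp Bq; apply: skel_homP => h Hh; hom_simpl Hh.
by move: (hom_skel Hh Bp) (hom_skel Hh Bq); case: (h p); case: (h q).
Qed.

Lemma skel_neg p : skel p -> skel p^*.
Proof. by move=> Bp; rewrite /boolean_skeleton dm_negK dm_joinC. Qed.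

Lemma skel_meetN e : skel e -> e ⊓ e^* = 0.
Proof. by move=> Be; rewrite -[LHS]dm_negK dm_negI dm_negK dm_joinC Be dm_neg1. Qed.

Definition meetN_complemented := forall x,
  exists t, t ⊓ (x ⊓ x^*) = 0 /\ t ⊔ (x ⊓ x^*) = x ⊔ x^*.

Lemma hom_complement_meetN h x t : hom h ->
  t ⊓ (x ⊓ x^*) = 0 -> t ⊔ (x ⊓ x^*) = x ⊔ x^* -> h t = m1_rcompl (h x).
Proof.
move=> Hh /(congr1 h) t0 /(congr1 h); move: t0; hom_simpl Hh.
by case: (h t); case: (h x).
Qed.

Lemma congruence_onI S th :
  (forall x y, th x y -> S x /\ S y) -> (forall x, S x -> th x x) ->
  (forall x y, th x y -> th y x) -> (forall x y z, th x y -> th y z -> th x z) ->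
  (forall x x' y y', th x x' -> th y y' -> th (x ⊔ y) (x' ⊔ y')) ->
  (forall x x' y y', th x x' -> th y y' -> th (x ⊓ y) (x' ⊓ y')) ->
  (forall x x', th x x' -> th x^* x'^*) -> is_congruence_on M S th.
Proof. by rewrite /is_congruence_on; intuition. Qed.

Section CongruenceOn.
Variables (S : set T) (th : T -> T -> Prop).
Hypothesis Hth : is_congruence_on M S th.
Lemma cong_refl x : S x -> th x x. Proof. by case: Hth => _ [H _]; exact: H. Qed.
Lemma cong_sym x y : th x y -> th y x. Proof. by case: Hth => _ [_ [H _]]; exact: H. Qed.
Lemma cong_trans y x z : th x y -> th y z -> th x z.
Proof. by case: Hth => _ [_ [_ [H _]]]; exact: H. Qed.
Lemma cong_join x x' y y' : th x x' -> th y y' -> th (x ⊔ y) (x' ⊔ y').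
Proof. by case: Hth => _ [_ [_ [_ [H _]]]]; exact: H. Qed.
Lemma cong_meet x x' y y' : th x x' -> th y y' -> th (x ⊓ y) (x' ⊓ y').
Proof. by case: Hth => _ [_ [_ [_ [_ [H _]]]]]; exact: H. Qed.
Lemma cong_neg x x' : th x x' -> th x^* x'^*.
Proof. by case: Hth => _ [_ [_ [_ [_ [_ H]]]]]; exact: H. Qed.
End CongruenceOn.

Lemma kernel_congruence h : hom h -> is_congruence M (fun p q => h p = h q).
Proof.
move=> Hh; apply: congruence_onI => [//|//|//|x y z -> //|x x' y y' e1 e2|x x' y y' e1 e2|x x' e].
- by hom_simpl Hh; rewrite e1 e2.
- by hom_simpl Hh; rewrite e1 e2.
- by hom_simpl Hh; rewrite e.
Qed.

Lemma dual_le_skel h k p : hom h -> hom k -> dual_le h k -> skel p -> h p = k p.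
Proof.
move=> Hh Hk hk Bp; move/m1_dleP: (hk p).
by move: (hom_skel Hh Bp) (hom_skel Hk Bp); case: (h p); case: (k p).
Qed.

Lemma perfect_same_kernel h k : perfect_extension M skel -> hom h -> hom k ->
  dual_le h k -> forall p q, h p = h q <-> k p = k q.
Proof.
move=> Hperf Hh Hk hk.
pose phi p q := [/\ skel p, skel q & h p = h q].
have Hphi : is_congruence_on M skel phi.
  apply: congruence_onI => [p q [] //|p Bp //|p q [? ? e] //|p q r [? ? e1] [? ? e2]|||].
  - by split=> //; rewrite e1.
  - move=> p p' q q' [? ? e1] [? ? e2]; split; try exact: skel_join.
    by hom_simpl Hh; rewrite e1 e2.
  - move=> p p' q q' [? ? e1] [? ? e2]; split; try exact: skel_meet.
    by hom_simpl Hh; rewrite e1 e2.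
  - move=> p p' [? ? e]; split; try exact: skel_neg.
    by hom_simpl Hh; rewrite e.
apply: (proj2 (Hperf phi Hphi)); try exact: kernel_congruence.
  by move=> p q Bp Bq; split=> [e|[]].
move=> p q Bp Bq; rewrite -(dual_le_skel Hh Hk hk Bp) -(dual_le_skel Hh Hk hk Bq).
by split=> [e|[]].
Qed.

Lemma dual_le_same_kernel h k : hom h -> hom k -> dual_le h k ->
  (forall p q, h p = h q <-> k p = k q) -> h = k \/ h = dual_f k.
Proof.
move=> Hh Hk hk K; apply: contrapT => /not_orP [nhk nhfk].
have [p hkp] : exists p, h p <> k p.
  by apply/existsNP => e; apply/nhk/funext.
have [q hfkq] : exists q, h q <> m1_f (k q).
  by apply/existsNP => e; apply/nhfk/funext.
have Kb p' q' : (h p' == h q') = (k p' == k q') by apply/eqP/eqP => /K.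
(* No values of h p, k p, h q, k q in M1 satisfy all of the following constraints. *)
move: (Kb p 0) (Kb p 1) (Kb p p^*) (Kb q 0) (Kb q 1) (Kb q q^*) (Kb (p ⊔ q) 1) (Kb (p ⊓ q) 0).
move: (introT (m1_dleP _ _) (hk p)) (introT (m1_dleP _ _) (hk q)).
move: (introF eqP hkp) (introF eqP hfkq).
hom_simpl Hh; hom_simpl Hk.
by case: (h p); case: (k p); case: (h q); case: (k q).
Qed.

Definition dual_le_trivial :=
  forall h k, hom h -> hom k -> dual_le h k -> h = k \/ h = dual_f k.

Lemma perfect_dual_le_trivial : perfect_extension M skel -> dual_le_trivial.
Proof.
move=> Hperf h k Hh Hk hk.
exact: dual_le_same_kernel Hh Hk hk (perfect_same_kernel Hperf Hh Hk hk).
Qed.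

Lemma prime_of_no_rcompl s s' : s' ⊑ s -> (forall t, t ⊓ s' = 0 -> t ⊔ s' <> s) ->
  exists2 R, dm_prime R & R s' /\ [set t | s ⊑ t ⊔ s'] `<=` R.
Proof.
move=> s's nt; set F := [set t | s ⊑ t ⊔ s'].
have HF : dm_filter F.
  split=> [|a b Fa Fb|a b Fa ab]; rewrite /F /=.
  - by rewrite dm_join1x; exact: dm_lex1.
  - by rewrite dm_joinC dm_joinIr !(dm_joinC s'); exact: dm_lexI.
  - by apply: dm_le_trans Fa _; exact: dm_leU2 ab (dm_le_refl _).
have [|R Rp GR] := filter_in_prime (filter_gen_filter s' (filter_one HF) (filter_meet HF)).
  case=> t Ft /dm_lex0 t0; apply: (nt (t ⊓ s)).
    by rewrite -dm_meetA (dm_meetC s) s's.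
  by rewrite dm_joinC dm_joinIr (proj1 (dm_leEjoin _ _) s's) dm_meetC dm_joinC.
exists R => //; split; first by apply: GR; exact: filter_gen_gen (filter_one HF).
by move=> t Ft; apply: GR; exact: filter_gen_sub.
Qed.

Lemma prime_below R s s' : dm_prime R -> [set t | s ⊑ t ⊔ s'] `<=` R ->
  exists2 Q, dm_prime Q & [/\ Q `<=` R, Q s & ~ Q s'].
Proof.
move=> Rp FR; set J := [set z | exists2 i, ~ R i & z ⊑ i ⊔ s'].
have HJ : dm_ideal J.
  split=> [|a b [i1 n1 l1] [i2 n2 l2]|a b [i ni l] ab].
  - by exists 0; [exact: prime_proper Rp|exact: dm_le0x].
  - exists (i1 ⊔ i2); first by move/(prime_join Rp) => [].
    by rewrite dm_joinUUr; exact: dm_leU2.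
  - by exists i => //; exact: dm_le_trans l.
have [|Q Qp [sQ QJ]] := prime_filter_theorem (up_filter s) HJ.
  by move=> z sz [i ni zi]; apply/ni/FR; exact: dm_le_trans zi.
exists Q => //; split.
- move=> z Qz; apply: contrapT => nRz; apply: (QJ z Qz).
  by exists z => //; exact: dm_leUl.
- by apply: sQ; exact: dm_le_refl.
- move=> Qs'; apply: (QJ s' Qs').
  by exists 0; [exact: prime_proper Rp|rewrite dm_join0x; exact: dm_le_refl].
Qed.

Lemma dual_le_trivial_complemented : dual_le_trivial -> meetN_complemented.
Proof.
move=> Htriv x; set s := x ⊔ x^*; set s' := x ⊓ x^*.
apply: contrapT => nt.
have s's : s' ⊑ s by apply: dm_le_trans (dm_leIl _ _) (dm_leUl _ _).
have [R Rp [Rs' FR]] : exists2 R, dm_prime R & R s' /\ [set t | s ⊑ t ⊔ s'] `<=` R.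
  by apply: prime_of_no_rcompl s's _ => t t0 ts; apply: nt; exists t.
have [Q Qp [QR Qs nQs']] := prime_below Rp FR.
have Rs : R s := filter_up (prime_filter Rp) Rs' s's.
have sN : s^* = s' by rewrite /s dm_negU dm_negK dm_meetC.
have hQs : hom_of_prime Q s = m1_1 by rewrite /hom_of_prime sN (asboolT Qs) (asboolF nQs').
have hRs : hom_of_prime R s = m1_a by rewrite /hom_of_prime sN (asboolT Rs) (asboolT Rs').
have := Htriv _ _ (hom_of_prime_hom Qp) (hom_of_prime_hom Rp) (hom_of_prime_le QR).
by case=> /(congr1 (fun h => h s)); rewrite /dual_f hQs hRs.
Qed.

Definition dm_equiv a b := a ⊓ b ⊔ a^* ⊓ b^*.

Lemma skel_equiv a b : skel a -> skel b -> skel (dm_equiv a b).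
Proof. by move=> Ba Bb; apply: skel_join; apply: skel_meet => //; exact: skel_neg. Qed.

Lemma dm_equivxx b : skel b -> dm_equiv b b = 1.
Proof. by move=> Bb; rewrite /dm_equiv !dm_meetxx. Qed.

Lemma meet_equiv a b : skel a -> skel b -> a ⊓ dm_equiv a b = b ⊓ dm_equiv a b.
Proof.
move=> Ba Bb; apply: dm_hom_ext => h Hh; rewrite /dm_equiv; hom_simpl Hh.
by move: (hom_skel Hh Ba) (hom_skel Hh Bb); case: (h a); case: (h b).
Qed.

Lemma cong_equiv S th a b : is_congruence_on M S th ->
  S b -> S b^* -> skel b -> th a b -> th (dm_equiv a b) 1.
Proof.
move=> Hth Sb SNb Bb ab; rewrite -(dm_equivxx Bb) /dm_equiv.
by apply: (cong_join Hth); apply: (cong_meet Hth) => //;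
  [exact: (cong_refl Hth Sb)|exact: (cong_neg Hth)|exact: (cong_refl Hth SNb)].
Qed.

Lemma meet_neg_skel x e : skel e -> x^* ⊓ e = (x ⊓ e)^* ⊓ e.
Proof.
move=> Be; apply: dm_hom_ext => h Hh; hom_simpl Hh.
by move: (hom_skel Hh Be); case: (h e); case: (h x).
Qed.

Definition skel_ext (phi : T -> T -> Prop) x y :=
  exists2 e, skel e & phi e 1 /\ x ⊓ e = y ⊓ e.

Section SkeletonExtension.
Variable phi : T -> T -> Prop.
Hypothesis Hphi : is_congruence_on M skel phi.

Lemma skel_ext_congruence : is_congruence M (skel_ext phi).
Proof.
have phiI e1 e2 : phi e1 1 -> phi e2 1 -> phi (e1 ⊓ e2) 1.
  by move=> p1 p2; rewrite -(dm_meetxx 1); exact: (cong_meet Hphi).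
have agreeIl x x' e1 e2 : x ⊓ e1 = x' ⊓ e1 -> x ⊓ (e1 ⊓ e2) = x' ⊓ (e1 ⊓ e2).
  by move=> q; rewrite !dm_meetA q.
have agreeIr x x' e1 e2 : x ⊓ e2 = x' ⊓ e2 -> x ⊓ (e1 ⊓ e2) = x' ⊓ (e1 ⊓ e2).
  by move=> q; rewrite !(dm_meetC e1) !dm_meetA q.
apply: congruence_onI => [//|x _|x y [e Be [pe q]]|x y z [e1 B1 [p1 q1]] [e2 B2 [p2 q2]]|
                         x x' y y' [e1 B1 [p1 q1]] [e2 B2 [p2 q2]]|
                         x x' y y' [e1 B1 [p1 q1]] [e2 B2 [p2 q2]]|x x' [e Be [pe q]]].
- by exists 1; [exact: skel1|split; [exact: (cong_refl Hphi skel1)|]].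
- by exists e.
- exists (e1 ⊓ e2); first exact: skel_meet.
  by split; [exact: phiI|rewrite (agreeIl _ _ _ _ q1) (agreeIr _ _ _ _ q2)].
- exists (e1 ⊓ e2); first exact: skel_meet.
  by split; [exact: phiI|rewrite !dm_meetUl (agreeIl _ _ _ _ q1) (agreeIr _ _ _ _ q2)].
- exists (e1 ⊓ e2); first exact: skel_meet.
  split; first exact: phiI.
  by rewrite [LHS]dm_meetIIr [RHS]dm_meetIIr (agreeIl _ _ _ _ q1) (agreeIr _ _ _ _ q2).
- by exists e => //; split=> //; rewrite (meet_neg_skel x Be) (meet_neg_skel x' Be) q.
Qed.

Lemma skel_ext_restricts : restricts_to skel (skel_ext phi) phi.
Proof.
move=> p q Bp Bq; split=> [[e Be [pe q_e]]|pq].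
  have below z : skel z -> phi (z ⊓ e) z.
    by move=> Bz; rewrite -{2}(dm_meetx1 z); apply: (cong_meet Hphi) => //; exact: (cong_refl Hphi).
  apply: (cong_trans Hphi (cong_sym Hphi (below _ Bp))).
  by rewrite q_e; exact: below.
exists (dm_equiv p q); first exact: skel_equiv.
split; last exact: meet_equiv.
by apply: (cong_equiv Hphi) => //; exact: skel_neg.
Qed.

Lemma skel_ext_min th : is_congruence M th -> restricts_to skel th phi ->
  forall x y, skel_ext phi x y -> th x y.
Proof.
move=> Hth Rth x y [e Be [pe q]].
have te : th e 1 by apply/(Rth _ _ Be skel1).
have below z : th (z ⊓ e) z.
  by rewrite -{2}(dm_meetx1 z); apply: (cong_meet Hth) => //; exact: (cong_refl Hth).
by apply: (cong_trans Hth (cong_sym Hth (below x))); rewrite q; exact: below.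
Qed.

End SkeletonExtension.

Lemma iso_boolean_product_complemented : iso_boolean_product_M1 M -> meetN_complemented.
Proof.
case=> [Y [kind [H [Hinj [HJ [HI [HN [H0 [H1 bp]]]]]]]]] x.
have [_ [_ [P0 [P1 [_ [_ [_ [_ [_ [eqcl patch]]]]]]]]]] := bp.
have [t Ht] : exists t, H t = (fun y => m1_rcompl (H x y)).
  have Kx := eqcl _ _ (ex_intro _ x erefl) (ex_intro _ x^* erefl).
  apply: (patch _ _ _ P0 P1 Kx) => y /=; rewrite HN; by case: (H x y).
exists t; split; apply: Hinj; rewrite ?HJ ?HI HN Ht ?H0; apply: funext => y /=;
  by case: (H x y).
Qed.

Section StonePoint.
Variable V : stone M.
Local Notation v := (sval V).

Lemma uf_negE e : skel e -> v e^* <-> ~ v e.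
Proof.
move=> Be; split=> [vn ve|nve]; last by case: (uf_compl (svalP V) Be).
by apply: (uf_zero (svalP V)); rewrite -(skel_meetN Be); exact: (uf_meet (svalP V)).
Qed.

Lemma uf_join e1 e2 : skel e1 -> skel e2 -> v (e1 ⊔ e2) -> v e1 \/ v e2.
Proof.
move=> B1 B2 v12; apply: contrapT => /not_orP [/(uf_negE B1) n1 /(uf_negE B2) n2].
have := uf_meet (svalP V) n1 n2; rewrite -dm_negU.
by move/(uf_negE (skel_join B1 B2)).
Qed.

Lemma point_prime : exists2 P, dm_prime P & v `<=` P.
Proof.
have [u1 uI] := (uf_one (svalP V), uf_meet (svalP V)).
have [|P Pp sP] := filter_in_prime (filter_gen_filter 1 u1 uI).
  by case=> g vg /dm_lex0; rewrite dm_meetx1 => g0; apply: (uf_zero (svalP V)); rewrite -g0.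
by exists P => // e ve; apply: sP; exact: filter_gen_sub.
Qed.

End StonePoint.

Lemma prime_point P : dm_prime P -> skel_ultrafilter M (skel `&` P).
Proof.
move=> Pp; have [[P1 PI _] P0 PU] := Pp; split.
- by move=> e [].
- by split; [exact: skel1|].
- by case.
- by move=> e1 e2 [B1 p1] [B2 p2]; split; [exact: skel_meet|exact: PI].
- move=> e Be; have : P (e ⊔ e^*) by rewrite Be.
  by case/PU=> ?; [left|right; split=> //; exact: skel_neg].
- by move=> e1 e2 B1 B2 [_ /(prime_meetE _ _ Pp) [p1 p2]].
Qed.

Definition point_of_prime P (Pp : dm_prime P) : stone M := exist _ _ (prime_point Pp).

Definition prime_of_point V := proj1_sig (cid2 (point_prime V)).

Lemma prime_of_point_prime V : dm_prime (prime_of_point V).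
Proof. by case: (proj2_sig (cid2 (point_prime V))). Qed.

Lemma prime_of_point_skel V e : skel e -> prime_of_point V e <-> sval V e.
Proof.
have [_ sP] := proj2_sig (cid2 (point_prime V)).
move=> Be; split=> [Pe|/sP //]; apply: contrapT => /(uf_negE V Be) /sP Pn.
have [[_ PI _] P0 _] := prime_of_point_prime V.
by apply: P0; rewrite -(skel_meetN Be); exact: PI.
Qed.

(* Composing with f when b, but not a, is a value makes the image M1, {0,a,1} or {0,1}. *)
Definition m1_normalize (h : T -> m1) : T -> m1 :=
  if `[< (exists x, h x = m1_b) /\ ~ (exists x, h x = m1_a) >] then dual_f h else h.

Lemma normalize_hom h : hom h -> hom (m1_normalize h).
Proof. by rewrite /m1_normalize; case: `[< _ >] => // /dual_f_hom. Qed.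

Lemma normalize_image h : (exists x, m1_normalize h x = m1_b) -> exists x, m1_normalize h x = m1_a.
Proof.
rewrite /m1_normalize; case: (asboolP (_ /\ _)) => [[[x hx] _] _|nba hb].
  by exists x; rewrite /dual_f hx.
by apply: contrapT => na; apply: nba.
Qed.

Lemma normalize_skel h e : m1_boolb (h e) -> m1_normalize h e = h e.
Proof. by rewrite /m1_normalize /dual_f; case: `[< _ >] => //; case: (h e). Qed.

Definition point_hom V := m1_normalize (hom_of_prime (prime_of_point V)).

Lemma point_hom_hom V : hom (point_hom V).
Proof. exact/normalize_hom/hom_of_prime_hom/prime_of_point_prime. Qed.

Lemma point_hom_skel V e : skel e -> point_hom V e = if `[< sval V e >] then m1_1 else m1_0.
Proof.
move=> Be.
have E : hom_of_prime (prime_of_point V) e = if `[< sval V e >] then m1_1 else m1_0.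
  rewrite /hom_of_prime (asbool_equiv_eq (prime_of_point_skel V Be)).
  rewrite (asbool_equiv_eq (prime_of_point_skel V (skel_neg Be))).
  case: (asboolP (sval V e)) => [ve|nve]; first by rewrite asboolF // => /(uf_negE V Be).
  by rewrite asboolT //; apply/(uf_negE V Be).
by rewrite /point_hom normalize_skel E //; case: `[< _ >].
Qed.

Lemma stone_basic_open e : open (stone_basic M e).
Proof. by move=> V ve; exists e. Qed.

Lemma stone_basicN e : skel e -> ~` stone_basic M e^* = stone_basic M e.
Proof.
move=> Be; apply/seteqP; split=> V /=; rewrite /stone_basic (uf_negE V Be).
  exact: contrapT.
by move=> ve [].
Qed.

Lemma stone_basic_clopen e : skel e -> clopen (stone_basic M e).
Proof.
move=> Be; split; first exact: stone_basic_open.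
by rewrite -(stone_basicN Be); apply: open_closedC; exact: stone_basic_open.
Qed.

Lemma stone_basicI e1 e2 : skel e1 -> skel e2 ->
  stone_basic M (e1 ⊓ e2) = stone_basic M e1 `&` stone_basic M e2.
Proof.
move=> B1 B2; apply/seteqP; split=> W; first exact: (uf_meetE (svalP W)).
by case; exact: (uf_meet (svalP W)).
Qed.

Lemma clopen_stone_basic (K : set (stone M)) : clopen K -> exists2 e, skel e & K = stone_basic M e.
Proof.
move=> [oK cK].
(* If 1 were not in [I], a prime filter avoiding [I] would be a point with no basic
   neighbourhood inside [K] or inside its complement. *)
pose I z := exists e1 e2, [/\ skel e1, skel e2, stone_basic M e1 `<=` K,
                              stone_basic M e2 `<=` ~` K & z ⊑ e1 ⊔ e2].
have none W : ~ stone_basic M 0 W by exact: (uf_zero (svalP W)).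
have HI : dm_ideal I.
  split=> [|a b [e1 [e2 [B1 B2 s1 s2 l]]] [e1' [e2' [B1' B2' s1' s2' l']]]|a b].
  - by exists 0, 0; split; [exact: skel0|exact: skel0|move=> W /none|move=> W /none|exact: dm_le0x].
  - exists (e1 ⊔ e1'), (e2 ⊔ e2'); split; try exact: skel_join.
    + by move=> W /(uf_join B1 B1') [/s1|/s1'].
    + by move=> W /(uf_join B2 B2') [/s2|/s2'].
    + by apply: dm_leUx; [apply: dm_le_trans l _|apply: dm_le_trans l' _];
        apply: dm_leU2; [exact: dm_leUl|exact: dm_leUl|exact: dm_leUr|exact: dm_leUr].
  - by move=> [e1 [e2 [B1 B2 s1 s2 l]]] ab; exists e1, e2; split=> //; exact: dm_le_trans l.
have I1 : I 1.
  apply: contrapT => nI1.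
  have [|P Pp [_ PI]] := prime_filter_theorem (up_filter 1) HI.
    by move=> z /dm_le1x ->.
  have [KV|nKV] := pselect (K (point_of_prime Pp)).
    have [e [Be Pe] sK] := oK _ KV; apply: (PI e Pe).
    by exists e, 0; split; [|exact: skel0| |move=> W /none|rewrite dm_joinx0; exact: dm_le_refl].
  have [e [Be Pe] sK] := closed_openC cK _ nKV; apply: (PI e Pe).
  by exists 0, e; split; [exact: skel0| |move=> W /none| |rewrite dm_join0x; exact: dm_le_refl].
have [e1 [e2 [B1 B2 s1 s2 /dm_le1x e12]]] := I1.
exists e1 => //; apply/seteqP; split=> W; last exact: s1.
move=> KW; have : sval W (e1 ⊔ e2) by rewrite e12; exact: (uf_one (svalP W)).
by case/(uf_join B1 B2) => // /s2.
Qed.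

Lemma stone_compact : compact [set: stone M].
Proof.
move=> F PF _.
have basic1 : stone_basic M 1 = setT.
  by apply/seteqP; split=> // W _; exact: (uf_one (svalP W)).
pose G := filter_gen [set e | skel e /\ F (stone_basic M e)] 1.
have HG : dm_filter G.
  apply: filter_gen_filter; first by split; [exact: skel1|rewrite basic1; exact: filterT].
  move=> e1 e2 [B1 F1] [B2 F2]; split; first exact: skel_meet.
  by rewrite stone_basicI //; exact: filterI.
have [|P Pp GP] := filter_in_prime HG.
  case=> e [_ Fe] /dm_lex0; rewrite dm_meetx1 => e0; rewrite e0 in Fe.
  by apply: (filter_not_empty F); apply: filterS Fe => W /(uf_zero (svalP W)).
exists (point_of_prime Pp); split=> // A B FA [B0 [oB0 B0V sB]].
have [e [Be Pe] se] := oB0 _ B0V.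
apply: contrapT => nAB.
have AN : A `<=` stone_basic M e^*.
  by move=> W AW; apply/(uf_negE W Be) => We; apply: nAB; exists W; split=> //; exact/sB/se.
have PN : P e^* by apply/GP/filter_gen_sub; split; [exact: skel_neg|exact: filterS AN FA].
by apply: (prime_proper Pp); rewrite -(skel_meetN Be); exact: (filter_meet (prime_filter Pp)).
Qed.

Lemma stone_hausdorff : hausdorff_space (stone M).
Proof.
have nbhs_basic (V : stone M) e : sval V e -> nbhs V (stone_basic M e).
  by move=> Ve; apply: open_nbhs_nbhs; split; [exact: stone_basic_open|].
have sep (a b : stone M) e : sval a e -> ~ sval b e -> ~ cluster (nbhs a) b.
  move=> ae nbe cab; have Be := uf_skel (svalP a) ae.
  have [W [W1 W2]] := cab _ _ (nbhs_basic _ _ ae) (nbhs_basic _ _ (proj2 (uf_negE b Be) nbe)).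
  exact: (proj1 (uf_negE W Be) W2 W1).
move=> p q cl; apply: contrapT => npq.
have [e pq] : exists e, ~ (sval p e <-> sval q e).
  apply/existsNP => same; apply: npq; move: p q same {cl} => [p Hp] [q Hq] /= same.
  by apply: eq_exist; apply: funext => e; apply: propext.
have [pe|npe] := pselect (sval p e).
  by apply: (sep p q e pe) => // qe; apply: pq.
have qe : sval q e by apply: contrapT => nqe; apply: pq.
apply: (sep q p e qe npe) => A B nA nB.
by have [W [BW AW]] := cl B A nB nA; exists W.
Qed.

Lemma stone_boolean_space : boolean_space (stone M).
Proof.
split; [exact: stone_compact|split; first exact: stone_hausdorff].
move=> U oU V UV; have [e Ve sU] := oU V UV.
by exists (stone_basic M e); split=> //; exact/stone_basic_clopen/(uf_skel (svalP V)).
Qed.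

Definition hom_factor (h : T -> m1) : Defs.factor :=
  if `[< exists x, h x = m1_a >] then
    (if `[< exists x, h x = m1_b >] then F_M1 else F_0a1)
  else F_01.

Lemma in_hom_factor h : hom h -> ((exists x, h x = m1_b) -> exists x, h x = m1_a) ->
  forall c, in_factor (hom_factor h) c <-> exists x, h x = c.
Proof.
move=> Hh ba c; have h0 := hom_zero Hh; have h1 := hom_one Hh.
rewrite /hom_factor; case: (asboolP (exists x, h x = m1_a)) => ha;
  case: (asboolP (exists x, h x = m1_b)) => hb; rewrite /in_factor.
- by split=> // _; case: c; [exists 0|exact: ha|exact: hb|exists 1].
- split; first by case=> [->|[->|->]]; [exists 0|exact: ha|exists 1].
  by case=> x <-; case E: (h x); [left|right; left|case: hb; exists x|right; right].
- by case: ha; exact: ba.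
- split; first by case=> ->; [exists 0|exists 1].
  by case=> x <-; case E: (h x); [left|case: ha; exists x|case: hb; exists x|right].
Qed.

Section Complemented.
Hypothesis HS : meetN_complemented.

Definition rcompl x := proj1_sig (cid (HS x)).

Lemma hom_rcompl h x : hom h -> h (rcompl x) = m1_rcompl (h x).
Proof. by move=> Hh; have [t0 t1] := proj2_sig (cid (HS x)); exact: hom_complement_meetN. Qed.

(* Both arguments of each [dm_equiv] are Boolean, and any congruence identifying [x] and
   [y] identifies them. *)
Definition equalizer x y :=
  let u := x ⊓ y ⊔ (x ⊔ y)^* in let v := x ⊔ y ⊔ (x ⊓ y)^* in
  let t := rcompl u in let r := t^* ⊓ rcompl v in
  dm_equiv (u ⊓ t) (v ⊓ t) ⊓ dm_equiv (v ⊓ v^* ⊓ r) ((v ⊔ v^*) ⊓ r).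

Ltac m1_eval h Hh x y :=
  hom_simpl Hh; rewrite ?(hom_rcompl _ Hh); hom_simpl Hh;
  by case: (h x); case: (h y).

Lemma hom_equalizer h x y : hom h -> h (equalizer x y) = if h x == h y then m1_1 else m1_0.
Proof. move=> Hh; rewrite /equalizer /dm_equiv /=; m1_eval h Hh x y. Qed.

Lemma skel_equalizer x y : skel (equalizer x y).
Proof.
apply: skel_homP => h Hh; rewrite (hom_equalizer _ _ Hh).
by case: (h x == h y).
Qed.

Lemma equalizer_meet x y : x ⊓ equalizer x y = y ⊓ equalizer x y.
Proof.
apply: dm_hom_ext => h Hh; rewrite (hom_meet Hh x) (hom_meet Hh y) (hom_equalizer _ _ Hh).
by case: (h x); case: (h y).
Qed.

Lemma equalizer_cong th x y : is_congruence M th -> th x y -> th (equalizer x y) 1.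
Proof.
move=> Hth xy; rewrite /equalizer /=.
set u := x ⊓ y ⊔ _; set v := x ⊔ y ⊔ _; set t := rcompl u; set r := t^* ⊓ _.
have refl z : th z z by exact: (cong_refl Hth).
have uv : th u v.
  have xIU : th (x ⊓ y) (x ⊔ y).
    apply: (cong_trans Hth (y := x)).
      by rewrite -{2}(dm_meetxx x); apply: (cong_meet Hth) => //; exact: (cong_sym Hth).
    by rewrite -{1}(dm_joinxx x); exact: (cong_join Hth).
  by apply: (cong_join Hth) => //; apply: (cong_neg Hth); exact: (cong_sym Hth).
have uN_r : u ⊓ u^* ⊓ r = (u ⊔ u^*) ⊓ r.
  apply: dm_hom_ext => h Hh; rewrite /r /t /u /v; m1_eval h Hh x y.
have vt_skel : skel (v ⊓ t).
  apply: skel_homP => h Hh; rewrite /t /u /v; m1_eval h Hh x y.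
have vr_skel : skel ((v ⊔ v^*) ⊓ r).
  apply: skel_homP => h Hh; rewrite /r /t /u /v; m1_eval h Hh x y.
rewrite -(dm_meetxx 1); apply: (cong_meet Hth); apply: (cong_equiv Hth) => //.
- by apply: (cong_meet Hth).
- have vu : th v u := cong_sym Hth uv.
  apply: (cong_trans Hth (y := u ⊓ u^* ⊓ r)).
    by apply: (cong_meet Hth) => //; apply: (cong_meet Hth) => //; exact: (cong_neg Hth).
  rewrite uN_r; apply: (cong_meet Hth) => //.
  by apply: (cong_join Hth) => //; exact: (cong_neg Hth).
Qed.

Lemma complemented_perfect : perfect_extension M skel.
Proof.
move=> phi Hphi; split.
  by exists (skel_ext phi); split; [exact: skel_ext_congruence|exact: skel_ext_restricts].
suff ext th : is_congruence M th -> restricts_to skel th phi ->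
    forall x y, th x y <-> skel_ext phi x y.
  by move=> th1 th2 C1 R1 C2 R2 x y; rewrite (ext _ C1 R1) (ext _ C2 R2).
move=> Hth Rth x y; split=> [xy|]; last exact: skel_ext_min.
exists (equalizer x y); first exact: skel_equalizer.
split; last exact: equalizer_meet.
by apply/(Rth _ _ (skel_equalizer x y) skel1); exact: equalizer_cong.
Qed.

Lemma point_hom_kernel V x y : point_hom V x = point_hom V y <-> sval V (equalizer x y).
Proof.
have := point_hom_skel V (skel_equalizer x y).
rewrite (hom_equalizer _ _ (point_hom_hom V)).
by case: eqP => [->|ne]; case: asboolP.
Qed.

Definition stone_rep x : stone M -> m1 := fun V => point_hom V x.

Definition stone_kind (V : stone M) := hom_factor (point_hom V).

Lemma stone_rep_inj x y : stone_rep x = stone_rep y -> x = y.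
Proof.
move=> E; apply: contrapT => nxy.
have [|P Pp [_ nPe]] := @prime_sep 1 (equalizer x y).
  move/dm_le1x => e1; apply: nxy.
  by rewrite -(dm_meetx1 x) -(dm_meetx1 y) -e1 equalizer_meet.
have [_ Pe] : sval (point_of_prime Pp) (equalizer x y).
  by apply/point_hom_kernel; exact: (congr1 (fun u => u (point_of_prime Pp)) E).
exact: nPe Pe.
Qed.

Lemma stone_rep_factor V c : in_factor (stone_kind V) c <-> exists x, stone_rep x V = c.
Proof. exact/in_hom_factor/normalize_image/point_hom_hom. Qed.

Lemma stone_rep_equalizer x y :
  [set V | stone_rep x V = stone_rep y V] = stone_basic M (equalizer x y).
Proof. by apply/seteqP; split=> V /point_hom_kernel. Qed.

Lemma stone_rep_patch x y e : skel e ->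
  stone_rep (x ⊓ e ⊔ y ⊓ e^*) =
  fun V => if `[< sval V e >] then stone_rep x V else stone_rep y V.
Proof.
move=> Be; apply: funext => V; rewrite /stone_rep; have Hh := point_hom_hom V.
hom_simpl Hh; rewrite (point_hom_skel V Be).
by case: asboolP; case: (point_hom V x); case: (point_hom V y).
Qed.

Lemma stone_rep_boolean_product :
  0 <> 1 -> boolean_product stone_kind (fun u => exists x, stone_rep x = u).
Proof.
move=> H01; have Hh := point_hom_hom.
split.
  have [|P Pp _] := @prime_sep 1 0; first by move/dm_lex0/esym.
  by exists (point_of_prime Pp).
split; first by move=> u [x <-] V; apply/stone_rep_factor; exists x.
split; first by exists 0; apply: funext => V; exact: (hom_zero (Hh V)).
split; first by exists 1; apply: funext => V; exact: (hom_one (Hh V)).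
split.
  by move=> u v [x <-] [y <-]; exists (x ⊔ y); apply: funext => V; exact: (hom_join (Hh V)).
split.
  by move=> u v [x <-] [y <-]; exists (x ⊓ y); apply: funext => V; exact: (hom_meet (Hh V)).
split; first by move=> u [x <-]; exists x^*; apply: funext => V; exact: (hom_neg (Hh V)).
split; first by move=> V c /stone_rep_factor [x <-]; exists (stone_rep x); split=> //; exists x.
split; first exact: stone_boolean_space.
split.
  move=> u v [x <-] [y <-]; rewrite stone_rep_equalizer.
  exact/stone_basic_clopen/skel_equalizer.
move=> u v K [x <-] [y <-] /clopen_stone_basic [e Be ->] w wK wnK.
exists (x ⊓ e ⊔ y ⊓ e^*); rewrite stone_rep_patch //; apply: funext => V.
by case: asboolP => [ve|nve]; [rewrite wK|rewrite wnK].
Qed.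

Theorem complemented_boolean_product : 0 <> 1 -> iso_boolean_product_M1 M.
Proof.
move=> H01; have Hh := point_hom_hom.
exists (stone M), stone_kind, stone_rep; split; first exact: stone_rep_inj.
split; first by move=> x y; apply: funext => V; exact: (hom_join (Hh V)).
split; first by move=> x y; apply: funext => V; exact: (hom_meet (Hh V)).
split; first by move=> x; apply: funext => V; exact: (hom_neg (Hh V)).
split; first by apply: funext => V; exact: (hom_zero (Hh V)).
split; first by apply: funext => V; exact: (hom_one (Hh V)).
exact: stone_rep_boolean_product.
Qed.

End Complemented.
End DeMorgan.

Theorem mainTheorem2 (T : Type) (M : dm_ops T) :
  is_deMorgan M ->
  dm_zero M <> dm_one M ->
  [/\ (perfect_extension M (boolean_skeleton M) <-> iso_boolean_product_M1 M),
      (iso_boolean_product_M1 M <->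
         (forall x y : T -> m1, is_hom_to_M1 M x -> is_hom_to_M1 M y ->
            dual_le x y -> x = y \/ x = (fun p => m1_f (y p))))
    & (perfect_extension M (boolean_skeleton M) <->
         (forall x y : T -> m1, is_hom_to_M1 M x -> is_hom_to_M1 M y ->
            dual_le x y -> x = y \/ x = (fun p => m1_f (y p))))].
Proof.
move=> HM H01.
have perf_triv := @perfect_dual_le_trivial _ _ HM.
have triv_compl := @dual_le_trivial_complemented _ _ HM.
have compl_perf := @complemented_perfect _ _ HM.
have compl_prod HS := @complemented_boolean_product _ _ HM HS H01.
have prod_compl := @iso_boolean_product_complemented _ M.
split; split=> H.
- exact/compl_prod/triv_compl/perf_triv.
- exact/compl_perf/prod_compl.
- exact/perf_triv/compl_perf/prod_compl.
- exact/compl_prod/triv_compl.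
- exact: perf_triv.
- exact/compl_perf/triv_compl.
Qed.
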